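(* Let $\kappa, m, n$ be positive integers such that $\kappa^4 m^4 n^4 - 32\kappa(m^2+n^2) = s^2$ for some integer $s$. Then \[ (\kappa m^2 - 2)(\kappa n^2 - 2) \leq 8. \] *)

From Stdlib Require Export ZArith Lia.

(* Put a = κm², b = κn², so that ab = (κmn)² and the hypothesis reads
   (ab)² - 32(a + b) = s².  Then z² - ab z + 8(a + b) has integer roots
   t, t', and 4((a - 2)(b - 2) - 8) = -(t - 4)(t' - 4), so it suffices that
   neither root is below 4.  For a root t ≤ 3 one gets
   (ta - 8)(tb - 8) = t³ + 64 ∈ {65, 72, 91}, and none of the finitely many
   factorisations makes (ta)(tb) = (tκmn)² a square. *)
From Stdlib Require Import ZArith Lia.
Open Scope Z_scope.

Lemma sqrt_sqr_of_sqr (x N : Z) : x * x = N -> Z.sqrt N * Z.sqrt N = N.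
Proof.
  intros <-. rewrite <- (Z.abs_square x), Z.sqrt_square by lia. reflexivity.
Qed.

Lemma int_roots_of_sqr_discriminant (P N s : Z) :
  0 < N -> 0 <= P -> P ^ 2 - 4 * N = s ^ 2 ->
  exists t t', 0 < t /\ 0 < t' /\ t + t' = P /\ t * t' = N.
Proof.
  intros hN hP hdisc.
  assert (hfac : (P - Z.abs s) * (P + Z.abs s) = 4 * N)
    by (pose proof (Z.abs_square s); nia).
  assert (hlt : Z.abs s < P) by nia.
  destruct (Z.Even_or_Odd (P - Z.abs s)) as [[k hk] | [k hk]].
  - exists k, (k + Z.abs s). nia.
  - exfalso. nia.
Qed.

Ltac interval_cases x lo hi :=
  lazymatch eval compute in (lo <? hi) with
  | true =>
      let lo' := eval compute in (lo + 1) in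
      destruct (Z.eq_dec x lo) as [-> | ?]; [| interval_cases x lo' hi]
  | false => assert (x = lo) by lia; subst x
  end.

Lemma shifted_mul_not_sqr (t p q x : Z) :
  1 <= t <= 3 -> 0 < p -> 0 < q -> (p - 8) * (q - 8) = t ^ 3 + 64 ->
  x * x <> p * q.
Proof.
  intro ht.
  enough (hle : forall p q, 0 < p <= q -> (p - 8) * (q - 8) = t ^ 3 + 64 ->
                  x * x <> p * q).
  { intros hp hq hpq. destruct (Z.le_ge_cases p q).
    - apply hle; lia.
    - rewrite (Z.mul_comm p q). apply hle; [lia | rewrite Z.mul_comm; exact hpq]. }
  clear p q. intros p q hpq heq hx.
  assert (hc : 65 <= t ^ 3 + 64 <= 91) by (split; nia).
  (* Both factors are positive: two negative ones have product at most 7 * 7. *)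
  assert (hp : 9 <= p <= 17) by nia.
  assert (hdiv : (t ^ 3 + 64) mod (p - 8) = 0).
  { rewrite <- heq, Z.mul_comm. apply Z.mod_mul. lia. }
  assert (hq : q = (t ^ 3 + 64) / (p - 8) + 8).
  { rewrite <- heq, Z.mul_comm, Z.div_mul by lia. ring. }
  subst q. apply sqrt_sqr_of_sqr in hx.
  interval_cases t 1 3; interval_cases p 9 17;
    vm_compute in hdiv, hx; discriminate.
Qed.

Lemma shifted_mul_eq (a b t t' : Z) :
  t + t' = a * b -> t * t' = 8 * (a + b) -> (t * a - 8) * (t * b - 8) = t ^ 3 + 64.
Proof.
  intros hsum hprod.
  transitivity (t ^ 2 * (a * b) - t * (8 * (a + b)) + 64); [ring |].
  rewrite <- hsum, <- hprod. ring.
Qed.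

Lemma root_ge4 (a b t t' x : Z) :
  0 < a -> 0 < b -> 0 < t -> t + t' = a * b -> t * t' = 8 * (a + b) ->
  x * x = a * b -> 4 <= t.
Proof.
  intros ha hb ht hsum hprod hx.
  destruct (Z.le_gt_cases 4 t) as [| hlt]; [assumption | exfalso].
  apply (shifted_mul_not_sqr t (t * a) (t * b) (t * x)); [lia | nia | nia | |].
  - exact (shifted_mul_eq a b t t' hsum hprod).
  - transitivity (t ^ 2 * (x * x)); [ring | rewrite hx; ring].
Qed.

Lemma shifted_mul_le8_of_roots (a b t t' : Z) :
  4 <= t -> 4 <= t' -> t + t' = a * b -> t * t' = 8 * (a + b) ->
  (a - 2) * (b - 2) <= 8.
Proof.
  intros ht ht' hsum hprod.
  assert (hid : 4 * ((a - 2) * (b - 2) - 8) = - ((t - 4) * (t' - 4))).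
  { transitivity (4 * (a * b) - 8 * (a + b) - 16); [ring |].
    rewrite <- hsum, <- hprod. ring. }
  nia.
Qed.

Theorem lemma3 (kappa m n s : Z) (hk : 0 < kappa) (hm : 0 < m) (hn : 0 < n)
  (hs : kappa ^ 4 * m ^ 4 * n ^ 4 - 32 * kappa * (m ^ 2 + n ^ 2) = s ^ 2) :
  (kappa * m ^ 2 - 2) * (kappa * n ^ 2 - 2) <= 8.
Proof.
  set (a := kappa * m ^ 2). set (b := kappa * n ^ 2).
  assert (ha : 0 < a) by (unfold a; nia).
  assert (hb : 0 < b) by (unfold b; nia).
  assert (hx : (kappa * m * n) * (kappa * m * n) = a * b) by (unfold a, b; ring).
  destruct (int_roots_of_sqr_discriminant (a * b) (8 * (a + b)) s)
    as (t & t' & ht & ht' & hsum & hprod); [lia | lia | |].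
  { rewrite <- hs. unfold a, b. ring. }
  apply (shifted_mul_le8_of_roots a b t t'); [| | exact hsum | exact hprod].
  - exact (root_ge4 a b t t' _ ha hb ht hsum hprod hx).
  - apply (root_ge4 a b t' t (kappa * m * n) ha hb ht'); lia.
Qed.
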